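(* For each $\mathcal V$-category $(X,a,\eta_a,\mu_a)$: (1) $(e_X,\alpha_a):(X,a)\to(TX,Ta)$ is a $\mathcal V$-functor; (2) $(m_X,\beta_a):(T^2X,T^2a)\to(TX,Ta)$ is a $\mathcal V$-functor, where $(TX,Ta)$ carries the $\mathcal V$-category structure $(T\eta_a,T\mu_a\cdot\kappa_{a,a})$ and $(T^2X,T^2a)$ the structure obtained by applying this construction twice.
   Context: Setting. $\mathcal V$ is a complete, cocomplete symmetric monoidal closed category with tensor $\otimes$, unit $I$ and chosen initial object $\bot$; coherence isomorphisms are suppressed. $\mathcal V\text{-}\mathbf{Rel}$: objects sets; 1-cells $r:X\rightharpoonup Y$ families of $\mathcal V$-objects $r(x,y)$; 2-cells families of morphisms, vertical composition ($\cdot$) componentwise; horizontal composition $(sr)(x,z)=\sum_yr(x,y)\otimes s(y,z)$; juxtaposition denotes whiskering. Functions $f$ are $\mathcal V$-relations with $f(x,y)=I$ if $f(x)=y$, $\bot$ otherwise; transpose $r^\circ(y,x)=r(x,y)$; $f\dashv f^\circ$ with unit $\lambda_f$, counit $\rho_f$. $\mathbb T=(T,e,m)$ is a monad on Set with lax extension to $\mathcal V\text{-}\mathbf{Rel}$: a lax functor $T$ agreeing with the Set-functor on functions, strictly functorial on 2-cells, with natural comparisons $\kappa_{s,r}:TsTr\to T(sr)$, $\kappa_{t,sr}\cdot(Tt\kappa_{s,r})=\kappa_{ts,r}\cdot(\kappa_{t,s}Tr)$, $\kappa_{r,1}=\kappa_{1,r}=1$, $T(f^\circ)=(Tf)^\circ$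 for functions $f$; 2-cells $\alpha_r:e_Yr\to Tre_X$, $\beta_r:m_YT^2r\to Trm_X$ (identities for functions) with (mon) $(\beta_re_{TX})\cdot(m_Y\alpha_{Tr})=1_{Tr}$; $(\beta_rTe_X)\cdot(m_Y\kappa^{-1}_{Tr,e_X})\cdot(m_YT\alpha_r)\cdot(m_Y\kappa_{e_Y,r})=1_{Tr}$; $(\beta_rTm_X)\cdot(m_Y\kappa^{-1}_{Tr,m_X})\cdot(m_YT\beta_r)\cdot(m_Y\kappa_{m_Y,T^2r})=(\beta_rm_{TX})\cdot(m_Y\beta_{Tr})$; (coh) $\alpha_{sr}=(\kappa_{s,r}e_X)\cdot(Ts\alpha_r)\cdot(\alpha_sr)$, $\beta_{sr}\cdot(m_ZT\kappa_{s,r})\cdot(m_Z\kappa_{Ts,Tr})=(\kappa_{s,r}m_X)\cdot(Ts\beta_r)\cdot(\beta_sT^2r)$; (nat) $(T\varphi e_X)\cdot\alpha_r=\alpha_{r'}\cdot(e_Y\varphi)$, $(T\varphi m_X)\cdot\beta_r=\beta_{r'}\cdot(m_YT^2\varphi)$. A $\mathcal V$-category $(X,a,\eta_a,\mu_a)$: $a:X\rightharpoonup X$, $\eta_a:1_X\to a$, $\mu_a:aa\to a$ with $\mu_a\cdot(\eta_aa)=1_a=\mu_a\cdot(a\eta_a)$, $\mu_a\cdot(\mu_aa)=\mu_a\cdot(a\mu_a)$. A $\mathcal V$-functor $(f,\varphi_f):(X,a)\to(Y,b)$: a function $f$ with $\varphi_f:fa\to bf$, $\varphi_f\cdot(f\eta_a)=\eta_bf$,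 $\varphi_f\cdot(f\mu_a)=(\mu_bf)\cdot(b\varphi_f)\cdot(\varphi_fa)$. (Here $\alpha_a:e_Xa\to Ta\,e_X$ and $\beta_a:m_XT^2a\to Ta\,m_X$.) *)

(* The coherence isomorphisms that
   the paper suppresses are made explicit. *)
From Stdlib Require Import ClassicalEpsilon FunctionalExtensionality.

Declare Scope cat_scope.
Delimit Scope cat_scope with cat.
Open Scope cat_scope.

Record Category := {
  ob :> Type;
  hom : ob -> ob -> Type;
  idm : forall A, hom A A;
  comp : forall A B C, hom B C -> hom A B -> hom A C;
  comp_idl : forall A B (f : hom A B), comp A B B (idm B) f = f;
  comp_idr : forall A B (f : hom A B), comp A A B f (idm A) = f;
  comp_assoc : forall A B C D (h : hom C D) (g : hom B C) (f : hom A B),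
      comp A C D h (comp A B C g f) = comp A B D (comp B C D h g) f }.
Arguments hom {c} _ _.
Arguments idm {c} _.
Arguments comp {c A B C} _ _.
Notation "g ∘ f" := (comp g f) (at level 40, left associativity) : cat_scope.

Record SmallCategory := {
  s_ob :> Type;
  s_hom : s_ob -> s_ob -> Type;
  s_id : forall a, s_hom a a;
  s_comp : forall a b c, s_hom b c -> s_hom a b -> s_hom a c;
  s_comp_idl : forall a b (f : s_hom a b), s_comp a b b (s_id b) f = f;
  s_comp_idr : forall a b (f : s_hom a b), s_comp a a b f (s_id a) = f;
  s_comp_assoc : forall a b c d (h : s_hom c d) (g : s_hom b c) (f : s_hom a b),
      s_comp a c d h (s_comp a b c g f) = s_comp a b d (s_comp b c d h g) f }.
Arguments s_hom {s} _ _.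
Arguments s_id {s} _.
Arguments s_comp {s a b c} _ _.

Record Diagram (J : SmallCategory) (C : Category) := {
  dob : J -> C;
  dmor : forall i j, s_hom i j -> hom (dob i) (dob j);
  dmor_id : forall i, dmor i i (s_id i) = idm (dob i);
  dmor_comp : forall i j k (v : s_hom j k) (u : s_hom i j),
      dmor i k (s_comp v u) = dmor j k v ∘ dmor i j u }.
Arguments dob {J C} d _.
Arguments dmor {J C} d {i j} _.

Record Colimit (J : SmallCategory) (C : Category) (D : Diagram J C) := {
  colim_ob : C;
  colim_in : forall j, hom (dob D j) colim_ob;
  colim_cocone : forall i j (u : s_hom i j), colim_in j ∘ dmor D u = colim_in i;
  colim_desc : forall (Z : C) (c : forall j, hom (dob D j) Z),
      (forall i j (u : s_hom i j), c j ∘ dmor D u = c i) -> hom colim_ob Z;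
  colim_desc_in : forall Z c H j, colim_desc Z c H ∘ colim_in j = c j;
  colim_desc_unique : forall Z c H (h : hom colim_ob Z),
      (forall j, h ∘ colim_in j = c j) -> h = colim_desc Z c H }.
Arguments colim_ob {J C D} _.
Arguments colim_in {J C D} _ _.
Arguments colim_desc {J C D} _ _ _ _.

Record Limit (J : SmallCategory) (C : Category) (D : Diagram J C) := {
  lim_ob : C;
  lim_pr : forall j, hom lim_ob (dob D j);
  lim_cone : forall i j (u : s_hom i j), dmor D u ∘ lim_pr i = lim_pr j;
  lim_lift : forall (Z : C) (c : forall j, hom Z (dob D j)),
      (forall i j (u : s_hom i j), dmor D u ∘ c i = c j) -> hom Z lim_ob;
  lim_pr_lift : forall Z c H j, lim_pr j ∘ lim_lift Z c H = c j;
  lim_lift_unique : forall Z c H (h : hom Z lim_ob),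
      (forall j, lim_pr j ∘ h = c j) -> h = lim_lift Z c H }.

Record VBase := {
  vcat :> Category;
  tens : vcat -> vcat -> vcat;
  tens_hom : forall A B C D, hom A B -> hom C D -> hom (tens A C) (tens B D);
  tens_id : forall A C, tens_hom A A C C (idm A) (idm C) = idm (tens A C);
  tens_comp : forall A B E C D F (f : hom A B) (f' : hom B E) (g : hom C D) (g' : hom D F),
      tens_hom A E C F (f' ∘ f) (g' ∘ g) = tens_hom B E D F f' g' ∘ tens_hom A B C D f g;
  unitI : vcat;
  assoc : forall A B C, hom (tens (tens A B) C) (tens A (tens B C));
  assoc_inv : forall A B C, hom (tens A (tens B C)) (tens (tens A B) C);
  assoc_iso1 : forall A B C, assoc A B C ∘ assoc_inv A B C = idm _;
  assoc_iso2 : forall A B C, assoc_inv A B C ∘ assoc A B C = idm _;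
  assoc_nat : forall A A' B B' C C' (f : hom A A') (g : hom B B') (h : hom C C'),
      assoc A' B' C' ∘ tens_hom _ _ _ _ (tens_hom _ _ _ _ f g) h
      = tens_hom _ _ _ _ f (tens_hom _ _ _ _ g h) ∘ assoc A B C;
  lunit : forall A, hom (tens unitI A) A;
  lunit_inv : forall A, hom A (tens unitI A);
  lunit_iso1 : forall A, lunit A ∘ lunit_inv A = idm _;
  lunit_iso2 : forall A, lunit_inv A ∘ lunit A = idm _;
  lunit_nat : forall A B (f : hom A B), lunit B ∘ tens_hom _ _ _ _ (idm unitI) f = f ∘ lunit A;
  runit : forall A, hom (tens A unitI) A;
  runit_inv : forall A, hom A (tens A unitI);
  runit_iso1 : forall A, runit A ∘ runit_inv A = idm _;
  runit_iso2 : forall A, runit_inv A ∘ runit A = idm _;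
  runit_nat : forall A B (f : hom A B), runit B ∘ tens_hom _ _ _ _ f (idm unitI) = f ∘ runit A;
  pentagon : forall A B C D,
      assoc A B (tens C D) ∘ assoc (tens A B) C D
      = tens_hom _ _ _ _ (idm A) (assoc B C D) ∘ assoc A (tens B C) D
        ∘ tens_hom _ _ _ _ (assoc A B C) (idm D);
  triangle : forall A B,
      tens_hom _ _ _ _ (idm A) (lunit B) ∘ assoc A unitI B
      = tens_hom _ _ _ _ (runit A) (idm B);
  braid : forall A B, hom (tens A B) (tens B A);
  braid_nat : forall A A' B B' (f : hom A A') (g : hom B B'),
      braid A' B' ∘ tens_hom _ _ _ _ f g = tens_hom _ _ _ _ g f ∘ braid A B;
  braid_invol : forall A B, braid B A ∘ braid A B = idm _;
  hexagon : forall A B C,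
      assoc B C A ∘ braid A (tens B C) ∘ assoc A B C
      = tens_hom _ _ _ _ (idm B) (braid A C) ∘ assoc B A C
        ∘ tens_hom _ _ _ _ (braid A B) (idm C);
  ihom : vcat -> vcat -> vcat;
  ev : forall B C, hom (tens (ihom B C) B) C;
  curry : forall A B C, hom (tens A B) C -> hom A (ihom B C);
  ev_curry : forall A B C (f : hom (tens A B) C),
      ev B C ∘ tens_hom _ _ _ _ (curry A B C f) (idm B) = f;
  curry_ev : forall A B C (g : hom A (ihom B C)),
      curry A B C (ev B C ∘ tens_hom _ _ _ _ g (idm B)) = g;
  bot : vcat;
  bot_init : forall A, hom bot A;
  bot_unique : forall A (f g : hom bot A), f = g;
  lim : forall (J : SmallCategory) (D : Diagram J vcat), Limit J vcat D;
  colim : forall (J : SmallCategory) (D : Diagram J vcat), Colimit J vcat D }.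

Arguments tens {v} _ _.
Arguments tens_hom {v A B C D} _ _.
Arguments unitI {v}.
Arguments assoc {v} _ _ _.
Arguments assoc_inv {v} _ _ _.
Arguments lunit {v} _.
Arguments lunit_inv {v} _.
Arguments runit {v} _.
Arguments runit_inv {v} _.
Arguments braid {v} _ _.
Arguments ihom {v} _ _.
Arguments ev {v} _ _.
Arguments curry {v A B C} _.
Arguments bot {v}.
Arguments bot_init {v} _.

Notation "A ⊗ B" := (tens A B) (at level 35, right associativity) : cat_scope.

Definition disc (Y : Type) : SmallCategory.
Proof.
  refine {| s_ob := Y; s_hom := fun a b => a = b; s_id := fun a => eq_refl;
            s_comp := fun a b c q p => eq_trans p q |}.
  - intros; reflexivity.
  - intros; apply eq_trans_refl_l.
  - intros; destruct h, g, f; reflexivity.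
Defined.

Definition disc_diag {V : VBase} {Y : Type} (F : Y -> V) : Diagram (disc Y) V.
Proof.
  refine (Build_Diagram (disc Y) V F
            (fun a b (p : a = b) =>
              match p in _ = b' return hom (F a) (F b') with eq_refl => idm (F a) end) _ _).
  - intros; reflexivity.
  - intros i j k v u. simpl in *. destruct v, u. simpl. symmetry. apply comp_idl.
Defined.

Definition Sum {V : VBase} {Y : Type} (F : Y -> V) : V :=
  colim_ob (colim V (disc Y) (disc_diag F)).

Definition sum_in {V : VBase} {Y : Type} (F : Y -> V) (y : Y) : hom (F y) (Sum F) :=
  colim_in (colim V (disc Y) (disc_diag F)) y.

Lemma disc_cocone {V : VBase} {Y : Type} (F : Y -> V) (Z : V) (c : forall y, hom (F y) Z) :
  forall i j (u : @s_hom (disc Y) i j), c j ∘ dmor (disc_diag F) u = c i.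
Proof. intros i j u. simpl in u. destruct u. simpl. apply comp_idr. Qed.

Definition sum_desc {V : VBase} {Y : Type} {F : Y -> V} {Z : V}
  (c : forall y, hom (F y) Z) : hom (Sum F) Z :=
  colim_desc (colim V (disc Y) (disc_diag F)) Z c (disc_cocone F Z c).

Definition sum_map {V : VBase} {Y : Type} {F G : Y -> V}
  (phi : forall y, hom (F y) (G y)) : hom (Sum F) (Sum G) :=
  sum_desc (fun y => sum_in G y ∘ phi y).

Definition botL {V : VBase} (A C : V) : hom (bot ⊗ A) C :=
  ev A C ∘ tens_hom (bot_init (ihom A C)) (idm A).
Definition botR {V : VBase} (A C : V) : hom (A ⊗ bot) C :=
  botL A C ∘ braid A bot.

Definition dist_l {V : VBase} {Y : Type} (A : V) (F : Y -> V) :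
  hom (A ⊗ Sum F) (Sum (fun y => A ⊗ F y)) :=
  ev A _ ∘ tens_hom (sum_desc (fun y => curry (sum_in (fun y' => A ⊗ F y') y ∘ braid (F y) A)))
                    (idm A)
  ∘ braid A (Sum F).

Definition dist_r {V : VBase} {Y : Type} (F : Y -> V) (B : V) :
  hom (Sum F ⊗ B) (Sum (fun y => F y ⊗ B)) :=
  ev B _ ∘ tens_hom (sum_desc (fun y => curry (sum_in (fun y' => F y' ⊗ B) y))) (idm B).

Definition tr {V : VBase} {A : Type} (P : A -> V) {a b : A} (e : a = b) : hom (P a) (P b) :=
  match e in _ = b' return hom (P a) (P b') with eq_refl => idm (P a) end.

Definition rel (V : VBase) (X Y : Type) := X -> Y -> ob V.

Definition cell {V : VBase} {X Y : Type} (r s : rel V X Y) :=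
  forall x y, hom (r x y) (s x y).

Definition id_cell {V : VBase} {X Y} (r : rel V X Y) : cell r r := fun x y => idm (r x y).

Definition vcomp {V : VBase} {X Y} {r s t : rel V X Y} (psi : cell s t) (phi : cell r s) : cell r t :=
  fun x y => psi x y ∘ phi x y.
Notation "psi · phi" := (vcomp psi phi) (at level 40, left associativity) : cat_scope.

Definition rc {V : VBase} {X Y Z} (s : rel V Y Z) (r : rel V X Y) : rel V X Z :=
  fun x z => Sum (fun y => r x y ⊗ s y z).

Definition frel {V : VBase} {X Y} (f : X -> Y) : rel V X Y :=
  fun x y => match excluded_middle_informative (f x = y) with
             | left _ => unitI | right _ => bot end.

Definition idrel {V : VBase} (X : Type) : rel V X X := frel (fun x : X => x).

Definition transp {V : VBase} {X Y} (r : rel V X Y) : rel V Y X := fun y x => r x y.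

Definition lw {V : VBase} {X Y Z} (t : rel V Y Z) {r r' : rel V X Y} (phi : cell r r') :
  cell (rc t r) (rc t r') :=
  fun x z => sum_map (fun y => tens_hom (phi x y) (idm (t y z))).
Definition rw {V : VBase} {X Y Z} {s s' : rel V Y Z} (phi : cell s s') (r : rel V X Y) :
  cell (rc s r) (rc s' r) :=
  fun x z => sum_map (fun y => tens_hom (idm (r x y)) (phi y z)).
Definition hc {V : VBase} {X Y Z} {s s' : rel V Y Z} {r r' : rel V X Y}
  (psi : cell s s') (phi : cell r r') : cell (rc s r) (rc s' r') :=
  fun x z => sum_map (fun y => tens_hom (phi x y) (psi y z)).

Definition assocR {V : VBase} {W X Y Z} (t : rel V Y Z) (s : rel V X Y) (r : rel V W X) :
  cell (rc (rc t s) r) (rc t (rc s r)) :=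
  fun x w => sum_desc (fun y =>
    sum_map (fun z => tens_hom (sum_in (fun y' => r x y' ⊗ s y' z) y) (idm (t z w))
                      ∘ assoc_inv (r x y) (s y z) (t z w))
    ∘ dist_l (r x y) (fun z => s y z ⊗ t z w)).

Definition assocR_inv {V : VBase} {W X Y Z} (t : rel V Y Z) (s : rel V X Y) (r : rel V W X) :
  cell (rc t (rc s r)) (rc (rc t s) r) :=
  fun x w => sum_desc (fun z =>
    sum_map (fun y => tens_hom (idm (r x y)) (sum_in (fun z' => s y z' ⊗ t z' w) z)
                      ∘ assoc (r x y) (s y z) (t z w))
    ∘ dist_r (fun y => r x y ⊗ s y z) (t z w)).

Definition lu {V : VBase} {X Y} (r : rel V X Y) : cell (rc (idrel Y) r) r :=
  fun x y => sum_desc (fun y' =>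
    match excluded_middle_informative (y' = y) as d
      return hom (r x y' ⊗ match d with left _ => unitI | right _ => bot end) (r x y) with
    | left e => tr (r x) e ∘ runit (r x y')
    | right _ => botR (r x y') (r x y)
    end).

Definition lu_inv {V : VBase} {X Y} (r : rel V X Y) : cell r (rc (idrel Y) r) :=
  fun x y => sum_in (fun y' => r x y' ⊗ idrel Y y' y) y ∘
    match excluded_middle_informative (y = y) as d
      return hom (r x y) (r x y ⊗ match d with left _ => unitI | right _ => bot end) with
    | left _ => runit_inv (r x y)
    | right n => False_rect _ (n eq_refl)
    end.

Definition ru {V : VBase} {X Y} (r : rel V X Y) : cell (rc r (idrel X)) r :=
  fun x y => sum_desc (fun x' =>
    match excluded_middle_informative (x = x') as d
      return hom ((match d with left _ => unitI | right _ => bot end) ⊗ r x' y) (r x y) with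
    | left e => tr (fun u => r u y) (eq_sym e) ∘ lunit (r x' y)
    | right _ => botL (r x' y) (r x y)
    end).

Definition ru_inv {V : VBase} {X Y} (r : rel V X Y) : cell r (rc r (idrel X)) :=
  fun x y => sum_in (fun x' => idrel X x x' ⊗ r x' y) x ∘
    match excluded_middle_informative (x = x) as d
      return hom (r x y) ((match d with left _ => unitI | right _ => bot end) ⊗ r x y) with
    | left _ => lunit_inv (r x y)
    | right n => False_rect _ (n eq_refl)
    end.

Definition fcomp {V : VBase} {X Y Z} (g : Y -> Z) (f : X -> Y) :
  cell (rc (frel g) (frel f)) (@frel V X Z (fun x => g (f x))) :=
  fun x z => sum_desc (fun y =>
    match excluded_middle_informative (f x = y) as d
      return hom ((match d with left _ => unitI | right _ => bot end) ⊗ frel g y z)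
                 (frel g (f x) z) with
    | left e => tr (fun u => frel g u z) (eq_sym e) ∘ lunit (frel g y z)
    | right _ => botL (frel g y z) (frel g (f x) z)
    end).

Definition fcomp_inv {V : VBase} {X Y Z} (g : Y -> Z) (f : X -> Y) :
  cell (@frel V X Z (fun x => g (f x))) (rc (frel g) (frel f)) :=
  fun x z => sum_in (fun y => frel f x y ⊗ frel g y z) (f x) ∘
    match excluded_middle_informative (f x = f x) as d
      return hom (frel g (f x) z)
                 ((match d with left _ => unitI | right _ => bot end) ⊗ frel g (f x) z) with
    | left _ => lunit_inv (frel g (f x) z)
    | right n => False_rect _ (n eq_refl)
    end.

Definition ecell {V : VBase} {X Y} {r s : rel V X Y} (e : r = s) : cell r s :=
  match e in _ = s' return cell r s' with eq_refl => id_cell r end.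

Definition frel_eq {V : VBase} {X Y} {f g : X -> Y} (H : forall x, f x = g x) :
  cell (@frel V X Y f) (frel g) :=
  ecell (f_equal frel (functional_extensionality f g H)).

Definition fiso {V : VBase} {X Y1 Y2 Z} (g1 : Y1 -> Z) (f1 : X -> Y1)
  (g2 : Y2 -> Z) (f2 : X -> Y2) (H : forall x, g1 (f1 x) = g2 (f2 x)) :
  cell (rc (@frel V _ _ g1) (frel f1)) (rc (frel g2) (frel f2)) :=
  fcomp_inv g2 f2 · frel_eq H · fcomp g1 f1.

Definition fcomp_eq {V : VBase} {X Y Z} (g : Y -> Z) (f : X -> Y) (h : X -> Z)
  (H : forall x, g (f x) = h x) : cell (rc (@frel V _ _ g) (frel f)) (frel h) :=
  frel_eq H · fcomp g f.
Definition fcomp_eq_inv {V : VBase} {X Y Z} (g : Y -> Z) (f : X -> Y) (h : X -> Z)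
  (H : forall x, g (f x) = h x) : cell (frel h) (rc (@frel V _ _ g) (frel f)) :=
  fcomp_inv g f · frel_eq (fun x => eq_sym (H x)).

Record SetMonad := {
  T : Type -> Type;
  fmap : forall X Y, (X -> Y) -> T X -> T Y;
  fmap_id : forall X (t : T X), fmap X X (fun x => x) t = t;
  fmap_comp : forall X Y Z (g : Y -> Z) (f : X -> Y) (t : T X),
      fmap X Z (fun x => g (f x)) t = fmap Y Z g (fmap X Y f t);
  ret : forall X, X -> T X;
  join : forall X, T (T X) -> T X;
  ret_nat : forall X Y (f : X -> Y) (x : X), fmap X Y f (ret X x) = ret Y (f x);
  join_nat : forall X Y (f : X -> Y) (t : T (T X)),
      fmap X Y f (join X t) = join Y (fmap (T X) (T Y) (fmap X Y f) t);
  join_ret : forall X (t : T X), join X (ret (T X) t) = t;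
  join_fmap_ret : forall X (t : T X), join X (fmap X (T X) (ret X) t) = t;
  join_assoc : forall X (t : T (T (T X))),
      join X (join (T X) t) = join X (fmap (T (T X)) (T X) (join X) t) }.
Arguments T s _ : clear implicits.
Arguments fmap {s X Y} _ _.
Arguments ret {s} X _.
Arguments join {s} X _.

Record LaxData (V : VBase) (M : SetMonad) := {
  Trel : forall X Y, rel V X Y -> rel V (T M X) (T M Y);
  Tcell : forall X Y (r s : rel V X Y), cell r s -> cell (Trel X Y r) (Trel X Y s);
  T_fun : forall X Y (f : X -> Y), Trel X Y (frel f) = frel (fmap f);
  kappa : forall X Y Z (s : rel V Y Z) (r : rel V X Y),
      cell (rc (Trel Y Z s) (Trel X Y r)) (Trel X Z (rc s r));
  alpha : forall X Y (r : rel V X Y),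
      cell (rc (frel (ret Y)) r) (rc (Trel X Y r) (frel (ret X)));
  beta : forall X Y (r : rel V X Y),
      cell (rc (frel (join Y)) (Trel _ _ (Trel X Y r))) (rc (Trel X Y r) (frel (join X))) }.
Arguments Trel {V M} l {X Y} _.
Arguments Tcell {V M} l {X Y r s} _.
Arguments T_fun {V M} l {X Y} _.
Arguments kappa {V M} l {X Y Z} _ _.
Arguments alpha {V M} l {X Y} _.
Arguments beta {V M} l {X Y} _.

Section LaxDefs.
Context {V : VBase} {M : SetMonad} (L : LaxData V M).

Definition T1eq (X : Type) : idrel (T M X) = Trel L (idrel X) :=
  eq_sym (eq_trans (T_fun L (fun x : X => x))
                   (f_equal frel (functional_extensionality _ _ (fmap_id M X)))).
Definition T1cell (X : Type) : cell (idrel (T M X)) (Trel L (idrel X)) := ecell (T1eq X).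

Definition castT {X Y} (f : X -> Y) : cell (frel (fmap f)) (Trel L (frel f)) :=
  ecell (eq_sym (T_fun L f)).
Definition castT' {X Y} (f : X -> Y) : cell (Trel L (frel f)) (frel (fmap f)) :=
  ecell (T_fun L f).
Definition castTT {X Y} (f : X -> Y) :
  cell (Trel L (Trel L (frel f))) (frel (fmap (fmap f))) :=
  ecell (eq_trans (f_equal (Trel L) (T_fun L f)) (T_fun L (fmap f))).

End LaxDefs.

Record LaxExt {V : VBase} {M : SetMonad} (L : LaxData V M) : Prop := {
  Tcell_id : forall X Y (r : rel V X Y), Tcell L (id_cell r) = id_cell (Trel L r);
  Tcell_comp : forall X Y (r s t : rel V X Y) (psi : cell s t) (phi : cell r s),
      Tcell L (psi · phi) = Tcell L psi · Tcell L phi;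
  T_transp : forall X Y (f : X -> Y), Trel L (transp (frel f)) = transp (frel (fmap f));
  kappa_nat : forall X Y Z (s s' : rel V Y Z) (r r' : rel V X Y)
      (psi : cell s s') (phi : cell r r'),
      kappa L s' r' · hc (Tcell L psi) (Tcell L phi) = Tcell L (hc psi phi) · kappa L s r;
  kappa_assoc : forall W X Y Z (t : rel V Y Z) (s : rel V X Y) (r : rel V W X),
      kappa L t (rc s r) · lw (Trel L t) (kappa L s r) · assocR (Trel L t) (Trel L s) (Trel L r)
      = Tcell L (assocR t s r) · kappa L (rc t s) r · rw (kappa L t s) (Trel L r);
  kappa_r1 : forall X Y (r : rel V X Y),
      kappa L r (idrel X) · lw (Trel L r) (T1cell L X) = Tcell L (ru_inv r) · ru (Trel L r);
  kappa_1r : forall X Y (r : rel V X Y),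
      kappa L (idrel Y) r · rw (T1cell L Y) (Trel L r) = Tcell L (lu_inv r) · lu (Trel L r);
  (* α_f, β_f are identities for functions f *)
  alpha_fun : forall X Y (f : X -> Y),
      alpha L (frel f) = rw (castT L f) (frel (ret X))
                         · fiso (ret Y) f (fmap f) (ret X) (fun x => eq_sym (ret_nat M X Y f x));
  beta_fun : forall X Y (f : X -> Y),
      beta L (frel f) = rw (castT L f) (frel (join X))
                        · fiso (join Y) (fmap (fmap f)) (fmap f) (join X)
                               (fun t => eq_sym (join_nat M X Y f t))
                        · lw (frel (join Y)) (castTT L f);
  mon1 : forall X Y (r : rel V X Y),
      id_cell (Trel L r)
      = ru (Trel L r)
        · lw (Trel L r) (fcomp_eq (join X) (ret (T M X)) (fun t => t) (join_ret M X))
        · assocR (Trel L r) (frel (join X)) (frel (ret (T M X)))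
        · rw (beta L r) (frel (ret (T M X)))
        · assocR_inv (frel (join Y)) (Trel L (Trel L r)) (frel (ret (T M X)))
        · lw (frel (join Y)) (alpha L (Trel L r))
        · assocR (frel (join Y)) (frel (ret (T M Y))) (Trel L r)
        · rw (fcomp_eq_inv (join Y) (ret (T M Y)) (fun t => t) (join_ret M Y)) (Trel L r)
        · lu_inv (Trel L r);
  mon2 : forall X Y (r : rel V X Y)
      (k : cell (Trel L (rc (Trel L r) (frel (ret X))))
                (rc (Trel L (Trel L r)) (Trel L (frel (ret X))))),
      k · kappa L (Trel L r) (frel (ret X)) = id_cell _ ->
      kappa L (Trel L r) (frel (ret X)) · k = id_cell _ ->
      id_cell (Trel L r)
      = ru (Trel L r)
        · lw (Trel L r) (fcomp_eq (join X) (fmap (ret X)) (fun t => t) (join_fmap_ret M X))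
        · assocR (Trel L r) (frel (join X)) (frel (fmap (ret X)))
        · rw (beta L r) (frel (fmap (ret X)))
        · assocR_inv (frel (join Y)) (Trel L (Trel L r)) (frel (fmap (ret X)))
        · lw (frel (join Y)) (lw (Trel L (Trel L r)) (castT' L (ret X)))
        · lw (frel (join Y)) k
        · lw (frel (join Y)) (Tcell L (alpha L r))
        · lw (frel (join Y)) (kappa L (frel (ret Y)) r)
        · lw (frel (join Y)) (rw (castT L (ret Y)) (Trel L r))
        · assocR (frel (join Y)) (frel (fmap (ret Y))) (Trel L r)
        · rw (fcomp_eq_inv (join Y) (fmap (ret Y)) (fun t => t) (join_fmap_ret M Y)) (Trel L r)
        · lu_inv (Trel L r);
  mon3 : forall X Y (r : rel V X Y)
      (k : cell (Trel L (rc (Trel L r) (frel (join X))))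
                (rc (Trel L (Trel L r)) (Trel L (frel (join X))))),
      k · kappa L (Trel L r) (frel (join X)) = id_cell _ ->
      kappa L (Trel L r) (frel (join X)) · k = id_cell _ ->
      lw (Trel L r) (fiso (join X) (fmap (join X)) (join X) (join (T M X))
                          (fun t => eq_sym (join_assoc M X t)))
      · assocR (Trel L r) (frel (join X)) (frel (fmap (join X)))
      · rw (beta L r) (frel (fmap (join X)))
      · assocR_inv (frel (join Y)) (Trel L (Trel L r)) (frel (fmap (join X)))
      · lw (frel (join Y)) (lw (Trel L (Trel L r)) (castT' L (join X)))
      · lw (frel (join Y)) k
      · lw (frel (join Y)) (Tcell L (beta L r))
      · lw (frel (join Y)) (kappa L (frel (join Y)) (Trel L (Trel L r)))
      · lw (frel (join Y)) (rw (castT L (join Y)) (Trel L (Trel L (Trel L r))))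
      · assocR (frel (join Y)) (frel (fmap (join Y))) (Trel L (Trel L (Trel L r)))
      = assocR (Trel L r) (frel (join X)) (frel (join (T M X)))
        · rw (beta L r) (frel (join (T M X)))
        · assocR_inv (frel (join Y)) (Trel L (Trel L r)) (frel (join (T M X)))
        · lw (frel (join Y)) (beta L (Trel L r))
        · assocR (frel (join Y)) (frel (join (T M Y))) (Trel L (Trel L (Trel L r)))
        · rw (fiso (join Y) (fmap (join Y)) (join Y) (join (T M Y))
                   (fun t => eq_sym (join_assoc M Y t))) (Trel L (Trel L (Trel L r)));
  alpha_coh : forall X Y Z (s : rel V Y Z) (r : rel V X Y),
      alpha L (rc s r)
      = rw (kappa L s r) (frel (ret X))
        · assocR_inv (Trel L s) (Trel L r) (frel (ret X))
        · lw (Trel L s) (alpha L r)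
        · assocR (Trel L s) (frel (ret Y)) r
        · rw (alpha L s) r
        · assocR_inv (frel (ret Z)) s r;
  beta_coh : forall X Y Z (s : rel V Y Z) (r : rel V X Y),
      beta L (rc s r)
      · lw (frel (join Z)) (Tcell L (kappa L s r))
      · lw (frel (join Z)) (kappa L (Trel L s) (Trel L r))
      = rw (kappa L s r) (frel (join X))
        · assocR_inv (Trel L s) (Trel L r) (frel (join X))
        · lw (Trel L s) (beta L r)
        · assocR (Trel L s) (frel (join Y)) (Trel L (Trel L r))
        · rw (beta L s) (Trel L (Trel L r))
        · assocR_inv (frel (join Z)) (Trel L (Trel L s)) (Trel L (Trel L r));
  alpha_nat : forall X Y (r r' : rel V X Y) (phi : cell r r'),
      rw (Tcell L phi) (frel (ret X)) · alpha L r = alpha L r' · lw (frel (ret Y)) phi;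
  beta_nat : forall X Y (r r' : rel V X Y) (phi : cell r r'),
      rw (Tcell L phi) (frel (join X)) · beta L r
      = beta L r' · lw (frel (join Y)) (Tcell L (Tcell L phi)) }.

Record VCatStr (V : VBase) (X : Type) := {
  vrel : rel V X X;
  veta : cell (idrel X) vrel;
  vmu : cell (rc vrel vrel) vrel }.
Arguments vrel {V X} _.
Arguments veta {V X} _.
Arguments vmu {V X} _.

Definition is_VCategory {V : VBase} {X : Type} (A : VCatStr V X) : Prop :=
  vmu A · rw (veta A) (vrel A) · lu_inv (vrel A) = id_cell (vrel A) /\
  vmu A · lw (vrel A) (veta A) · ru_inv (vrel A) = id_cell (vrel A) /\
  vmu A · rw (vmu A) (vrel A)
  = vmu A · lw (vrel A) (vmu A) · assocR (vrel A) (vrel A) (vrel A).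

Definition is_VFunctor {V : VBase} {X Y : Type} (A : VCatStr V X) (B : VCatStr V Y)
  (f : X -> Y) (phi : cell (rc (frel f) (vrel A)) (rc (vrel B) (frel f))) : Prop :=
  phi · lw (frel f) (veta A)
    = rw (veta B) (frel f) · fiso f (fun x => x) (fun y => y) f (fun x => eq_refl) /\
  phi · lw (frel f) (vmu A)
    = rw (vmu B) (frel f) · assocR_inv (vrel B) (vrel B) (frel f) · lw (vrel B) phi
      · assocR (vrel B) (frel f) (vrel A) · rw phi (vrel A)
      · assocR_inv (frel f) (vrel A) (vrel A).

Definition TVCat {V : VBase} {M : SetMonad} (L : LaxData V M) {X : Type}
  (A : VCatStr V X) : VCatStr V (T M X) :=
  {| vrel := Trel L (vrel A);
     veta := Tcell L (veta A) · T1cell L X;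
     vmu := Tcell L (vmu A) · kappa L (vrel A) (vrel A) |}.

(** Naturality pushes
    [η_a] through [α_a] (resp. [β_a]) to [α_{1_X}] (resp. [β_{1_X}]), a
    coherence isomorphism because [1_X] is a function; it pushes [μ_a] to
    [α_{aa}] (resp. [β_{aa}]), which (coh) splits into two copies of [α_a]
    (resp. [β_a]). *)
From Stdlib Require Import ProofIrrelevance FunctionalExtensionality.

Section CellCalculus.
Context {V : VBase}.

Lemma cell_ext {X Y} {r s : rel V X Y} (c1 c2 : cell r s) :
  (forall x y, c1 x y = c2 x y) -> c1 = c2.
Proof.
  intro H; apply functional_extensionality_dep; intro x.
  apply functional_extensionality_dep; intro y; apply H.
Qed.

Lemma vcomp_assoc {X Y} {r s t u : rel V X Y} (c : cell t u) (b : cell s t) (a : cell r s) :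
  c · (b · a) = c · b · a.
Proof. apply cell_ext; intros; apply comp_assoc. Qed.

Lemma vcomp_idl {X Y} {r s : rel V X Y} (a : cell r s) : id_cell s · a = a.
Proof. apply cell_ext; intros; apply comp_idl. Qed.

Lemma vcomp_idr {X Y} {r s : rel V X Y} (a : cell r s) : a · id_cell r = a.
Proof. apply cell_ext; intros; apply comp_idr. Qed.

Lemma sum_desc_in {Y : Type} {F : Y -> V} {Z : V} (c : forall y, hom (F y) Z) y :
  sum_desc c ∘ sum_in F y = c y.
Proof. exact (colim_desc_in _ _ _ (colim V (disc Y) (disc_diag F)) Z c (disc_cocone F Z c) y). Qed.

Lemma sum_desc_unique {Y : Type} {F : Y -> V} {Z : V} (c : forall y, hom (F y) Z) h :
  (forall y, h ∘ sum_in F y = c y) -> h = sum_desc c.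
Proof. exact (colim_desc_unique _ _ _ (colim V (disc Y) (disc_diag F)) Z c (disc_cocone F Z c) h). Qed.

Lemma sum_map_id {Y : Type} (F : Y -> V) : sum_map (fun y => idm (F y)) = idm (Sum F).
Proof.
  symmetry; apply sum_desc_unique; intro y.
  now rewrite comp_idl, comp_idr.
Qed.

Lemma sum_map_comp {Y : Type} {F G H : Y -> V} (psi : forall y, hom (G y) (H y))
  (phi : forall y, hom (F y) (G y)) :
  sum_map (fun y => psi y ∘ phi y) = sum_map psi ∘ sum_map phi.
Proof.
  symmetry; apply sum_desc_unique; intro y.
  unfold sum_map; rewrite <- comp_assoc, sum_desc_in, comp_assoc, sum_desc_in.
  symmetry; apply comp_assoc.
Qed.

Lemma lw_id {X Y Z} (t : rel V Y Z) (r : rel V X Y) : lw t (id_cell r) = id_cell (rc t r).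
Proof.
  apply cell_ext; intros x z; unfold lw, id_cell.
  etransitivity; [|apply sum_map_id]; f_equal.
  apply functional_extensionality_dep; intro y; apply tens_id.
Qed.

Lemma rw_id {X Y Z} (t : rel V Y Z) (r : rel V X Y) : rw (id_cell t) r = id_cell (rc t r).
Proof.
  apply cell_ext; intros x z; unfold rw, id_cell.
  etransitivity; [|apply sum_map_id]; f_equal.
  apply functional_extensionality_dep; intro y; apply tens_id.
Qed.

Lemma rw_comp {X Y Z} {r s u : rel V Y Z} (b : cell s u) (a : cell r s) (t : rel V X Y) :
  rw (b · a) t = rw b t · rw a t.
Proof.
  apply cell_ext; intros x z; unfold rw, vcomp.
  etransitivity; [|apply sum_map_comp]; f_equal.
  apply functional_extensionality_dep; intro y.
  now rewrite <- tens_comp, comp_idl.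
Qed.

Lemma lw_comp {X Y Z} (t : rel V Y Z) {r s u : rel V X Y} (b : cell s u) (a : cell r s) :
  lw t (b · a) = lw t b · lw t a.
Proof.
  apply cell_ext; intros x z; unfold lw, vcomp.
  etransitivity; [|apply sum_map_comp]; f_equal.
  apply functional_extensionality_dep; intro y.
  now rewrite <- tens_comp, comp_idl.
Qed.

Lemma ecell_comp {X Y} {r s u : rel V X Y} (e2 : s = u) (e1 : r = s) :
  ecell e2 · ecell e1 = ecell (eq_trans e1 e2).
Proof. destruct e2; apply vcomp_idl. Qed.

Lemma lw_ecell {X Y Z} (t : rel V Y Z) {r s : rel V X Y} (e : r = s) :
  lw t (ecell e) = ecell (f_equal (rc t) e).
Proof. destruct e; apply lw_id. Qed.

Lemma rw_ecell {X Y Z} {r s : rel V Y Z} (e : r = s) (t : rel V X Y) :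
  rw (ecell e) t = ecell (f_equal (fun u => rc u t) e).
Proof. destruct e; apply rw_id. Qed.

(* Up to transport, [fiso] only depends on the four functions, not on how the
   relations are presented. *)
Lemma ecell_fiso {X Y1 Y2 Z} (g1 : Y1 -> Z) (f1 : X -> Y1) (g2 g2' : Y2 -> Z)
  (f2 f2' : X -> Y2) H H' (s : rel V X Z)
  (E : rc (frel g2) (frel f2) = s) (E' : rc (frel g2') (frel f2') = s) :
  g2 = g2' -> f2 = f2' ->
  ecell E · fiso g1 f1 g2 f2 H = ecell E' · fiso g1 f1 g2' f2' H'.
Proof.
  intros -> ->.
  now rewrite (proof_irrelevance _ E E'), (proof_irrelevance _ H H').
Qed.

Lemma ecell_fiso_ecell {X Y1 Y2 Z} (g1 g1' : Y1 -> Z) (f1 f1' : X -> Y1) (g2 g2' : Y2 -> Z)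
  (f2 f2' : X -> Y2) H H' (s : rel V X Z)
  (E : rc (frel g2) (frel f2) = s) (E' : rc (frel g2') (frel f2') = s)
  (F : rc (frel g1') (frel f1') = rc (frel g1) (frel f1)) :
  g1 = g1' -> f1 = f1' -> g2 = g2' -> f2 = f2' ->
  ecell E · fiso g1 f1 g2 f2 H · ecell F = ecell E' · fiso g1' f1' g2' f2' H'.
Proof.
  intros -> -> -> ->.
  rewrite (proof_irrelevance _ E E'), (proof_irrelevance _ H H'),
    (proof_irrelevance _ F eq_refl).
  apply vcomp_idr.
Qed.

End CellCalculus.

Lemma fmap_idE (M : SetMonad) (X : Type) : @fmap M X X (fun x => x) = (fun t => t).
Proof. apply functional_extensionality, fmap_id. Qed.

Section LaxExtension.
Context {V : VBase} {M : SetMonad} (L : LaxData V M) (HL : LaxExt L).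

Lemma Tcell_ecell {X Y} {r s : rel V X Y} (e : r = s) :
  Tcell L (ecell e) = ecell (f_equal (Trel L) e).
Proof. destruct e; apply (Tcell_id L HL). Qed.

Lemma alpha_unit {X} {r : rel V X X} (eta : cell (idrel X) r) :
  alpha L r · lw (frel (ret X)) eta
  = rw (Tcell L eta · T1cell L X) (frel (ret X))
    · fiso (ret X) (fun x => x) (fun t => t) (ret X) (fun x => eq_refl).
Proof.
  rewrite <- (alpha_nat L HL), (alpha_fun L HL X X (fun x => x) : alpha L (idrel X) = _), rw_comp.
  rewrite !vcomp_assoc, <- !(vcomp_assoc (rw (Tcell L eta) _)); f_equal.
  unfold castT, T1cell; rewrite !rw_ecell.
  apply ecell_fiso; [apply fmap_idE | reflexivity].
Qed.

Lemma alpha_comp {X Y Z} {s : rel V Y Z} {r : rel V X Y} {t : rel V X Z}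
  (mu : cell (rc s r) t) :
  alpha L t · lw (frel (ret Z)) mu
  = rw (Tcell L mu · kappa L s r) (frel (ret X))
    · assocR_inv (Trel L s) (Trel L r) (frel (ret X))
    · lw (Trel L s) (alpha L r)
    · assocR (Trel L s) (frel (ret Y)) r
    · rw (alpha L s) r
    · assocR_inv (frel (ret Z)) s r.
Proof.
  rewrite <- (alpha_nat L HL), (alpha_coh L HL), rw_comp.
  now rewrite !vcomp_assoc.
Qed.

Lemma beta_unit {X} {r : rel V X X} (eta : cell (idrel X) r) :
  beta L r · lw (frel (join X)) (Tcell L (Tcell L eta · T1cell L X) · T1cell L (T M X))
  = rw (Tcell L eta · T1cell L X) (frel (join X))
    · fiso (join X) (fun t => t) (fun t => t) (join X) (fun t => eq_refl).
Proof.
  rewrite (Tcell_comp L HL), !lw_comp, !vcomp_assoc.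
  rewrite <- (beta_nat L HL), (beta_fun L HL X X (fun x => x) : beta L (idrel X) = _), rw_comp, !vcomp_assoc.
  rewrite <- !(vcomp_assoc (rw (Tcell L eta) _)); f_equal.
  unfold castT, castTT, T1cell.
  rewrite Tcell_ecell, !lw_ecell, !rw_ecell, <- !vcomp_assoc, !ecell_comp, vcomp_assoc.
  apply ecell_fiso_ecell; rewrite ?fmap_idE; reflexivity.
Qed.

Lemma beta_comp {X Y Z} {s : rel V Y Z} {r : rel V X Y} {t : rel V X Z}
  (mu : cell (rc s r) t) :
  beta L t · lw (frel (join Z)) (Tcell L (Tcell L mu · kappa L s r) · kappa L (Trel L s) (Trel L r))
  = rw (Tcell L mu · kappa L s r) (frel (join X))
    · assocR_inv (Trel L s) (Trel L r) (frel (join X))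
    · lw (Trel L s) (beta L r)
    · assocR (Trel L s) (frel (join Y)) (Trel L (Trel L r))
    · rw (beta L s) (Trel L (Trel L r))
    · assocR_inv (frel (join Z)) (Trel L (Trel L s)) (Trel L (Trel L r)).
Proof.
  rewrite (Tcell_comp L HL), !lw_comp, !vcomp_assoc.
  rewrite <- (beta_nat L HL), <- !vcomp_assoc.
  rewrite !(vcomp_assoc (beta L _)), (beta_coh L HL), rw_comp.
  now rewrite !vcomp_assoc.
Qed.

End LaxExtension.

Theorem mainTheorem4 (V : VBase) (M : SetMonad) (L : LaxData V M) (HL : LaxExt L)
  (X : Type) (A : VCatStr V X) (HA : is_VCategory A) :
  is_VFunctor A (TVCat L A) (ret X) (alpha L (vrel A)) /\
  is_VFunctor (TVCat L (TVCat L A)) (TVCat L A) (join X) (beta L (vrel A)).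
Proof.
  split; split; cbn [veta vmu vrel TVCat].
  - exact (alpha_unit L HL (veta A)).
  - exact (alpha_comp L HL (vmu A)).
  - exact (beta_unit L HL (veta A)).
  - exact (beta_comp L HL (vmu A)).
Qed.
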